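(* Let $U$ be a discrete group with torsion and $e\in\mathbb{C}[U]$ a nontrivial projection. In $\mathbb{C}[U\wr\mathbb{Z}]$ put $e_i=t^{-i}et^i$, $f_i=1-e_i$ for $i\in\mathbb{Z}$, and for $n\ge 2$ put $q_n=f_1e_2e_3\cdots e_{n-1}f_n$ (so $q_2=f_1f_2$). If $1\le m<n$ and $1\le m'<n'$, then \[ q_{n'}t^{-m'}t^{m}q_n=\delta_{n,n'}\delta_{m,m'}\,q_n . \]
   Context: $U\wr\mathbb{Z}=(\bigoplus_{i\in\mathbb{Z}}U)\rtimes C_\infty$, where $C_\infty$ is infinite cyclic with generator $t$ acting by the shift $t^{-1}((g_n)_{n})t=(g_{n-1})_n$; $U$ is identified with the subgroup of elements $(\dots,1,u,1,\dots)$ with $u$ in position $0$. A nontrivial projection means $e=e^*=e^2$, $e\ne 0,1$. $\delta$ is the Kronecker delta. *)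

From HB Require Import structures.
From mathcomp Require Import all_boot all_order all_algebra.
From mathcomp Require Import finmap.
From mathcomp Require Import Rstruct.
From mathcomp.real_closed Require Import complex.

Set Implicit Arguments.
Unset Strict Implicit.
Unset Printing Implicit Defensive.

Import Order.TTheory GRing.Theory Num.Theory.
Local Open Scope fset_scope.
Local Open Scope ring_scope.

Definition Cx : numClosedFieldType := (Rdefinitions.R)[i].

Section GroupAlgebra.
Variables (G : choiceType) (mulG : G -> G -> G) (invG : G -> G) (oneG : G).

Definition galg := {fsfun G -> Cx with 0}.

Definition galg_zero : galg := [fsfun g in fset0 => 0].

Definition galg_of (x : G) : galg := [fsfun g in [fset x] => 1].

Definition galg_one : galg := galg_of oneG.

Definition galg_add (a b : galg) : galg :=
  [fsfun g in finsupp a `|` finsupp b => a g + b g].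

Definition galg_scale (c : Cx) (a : galg) : galg :=
  [fsfun g in finsupp a => c * a g].

Definition galg_sub (a b : galg) : galg := galg_add a (galg_scale (-1) b).

Definition galg_mul (a b : galg) : galg :=
  [fsfun g in [fset mulG x y | x in finsupp a, y in finsupp b] =>
     \sum_(x <- finsupp a) a x * b (mulG (invG x) g)].

Definition galg_star (a : galg) : galg :=
  [fsfun g in [fset invG x | x in finsupp a] => (a (invG g))^*].

Definition nontrivial_projection (e : galg) : Prop :=
  [/\ galg_star e = e, galg_mul e e = e, e <> galg_zero & e <> galg_one].

End GroupAlgebra.

Definition galg_map (G H : choiceType) (f : G -> H) (a : galg G) : galg H :=
  [fsfun y in [fset f x | x in finsupp a] =>
     \sum_(x <- finsupp a | f x == y) a x].

(* The wreath product U wr Z = (+)_{i in Z} U  x|  C_oo.               *)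
(* An element (g, a) stands for g t^a, where g : Z -> U is finitely    *)
(* supported (default 1).  The action is t^-1 (g_n)_n t = (g_(n-1))_n, *)
(* i.e. t^-k g t^k = shift k g with (shift k g)_n = g_(n-k).           *)
Section Wreath.
Variable U : groupType.

Definition dsum := {fsfun int -> U with 1%g}.

Definition dsum_one : dsum := [fsfun n in fset0 => 1%g].

Definition dsum_mul (g h : dsum) : dsum :=
  [fsfun n in finsupp g `|` finsupp h => (g n * h n)%g].

Definition dsum_inv (g : dsum) : dsum :=
  [fsfun n in finsupp g => (g n)^-1%g].

Definition dsum_shift (k : int) (g : dsum) : dsum :=
  [fsfun n in [fset m + k | m in finsupp g] => g (n - k)].

Definition dsum_of (u : U) : dsum := [fsfun n in [fset (0 : int)] => u].

Definition wreath : choiceType := (dsum * int)%type.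

Definition wone : wreath := (dsum_one, 0).

(* (g t^a)(h t^b) = g (t^a h t^-a) t^(a+b) = g shift(-a) h  t^(a+b) *)
Definition wmul (x y : wreath) : wreath :=
  (dsum_mul x.1 (dsum_shift (- x.2) y.1), x.2 + y.2).

Definition winv (x : wreath) : wreath :=
  (dsum_shift x.2 (dsum_inv x.1), - x.2).

Definition wt : wreath := (dsum_one, 1).

Definition wU (u : U) : wreath := (dsum_of u, 0).

Definition wpown (x : wreath) (n : nat) : wreath := iter n (wmul x) wone.

Definition wpowz (x : wreath) (z : int) : wreath :=
  match z with
  | Posz n => wpown x n
  | Negz n => winv (wpown x n.+1)
  end.

Definition W := galg wreath.
Definition Wmul := galg_mul wmul winv.
Definition Wsub := @galg_sub wreath.
Definition Wone := galg_one wone.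
Definition Wt (z : int) : W := galg_of (wpowz wt z).

Definition e_ (e : galg U) (i : int) : W :=
  Wmul (Wt (- i)) (Wmul (galg_map wU e) (Wt i)).

Definition f_ (e : galg U) (i : int) : W := Wsub Wone (e_ e i).

Definition q_ (e : galg U) (n : nat) : W :=
  Wmul (f_ e 1) (foldr (fun i acc => Wmul (e_ e i%:Z) acc) (f_ e n%:Z)
                       (iota 2 (n - 2))).

End Wreath.

Definition nontrivial_projection_in (U : groupType) (e : galg U) : Prop :=
  nontrivial_projection (fun x y : U => (x * y)%g) (fun x : U => x^-1%g) 1%g e.

Definition has_torsion (U : groupType) : Prop :=
  exists u : U, u != 1%g /\ exists k : nat, (0 < k)%N /\ (u ^+ k)%g = 1%g.

From HB Require Import structures.
From mathcomp Require Import all_boot all_order all_algebra.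
From mathcomp Require Import finmap.
From mathcomp Require Import Rstruct.
From mathcomp.real_closed Require Import complex.
From mathcomp Require Import zify.
From Stdlib Require Import Classical.

(* The e_i pairwise commute (e_i is supported on the i-th
   coordinate of the direct sum) and are idempotent, so q_n is a product of
   commuting idempotents of the form e_i or f_i = 1 - e_i, and two such
   products multiply to 0 as soon as some index occurs with e in one and
   with f in the other.  Conjugation by t^d shifts all indices by -d, so
   q_n' t^(m-m') q_n = q_n' (t^d q_n t^-d) t^d with d = m - m'.  For d > 0
   the shifted q_n contains e_1 (coming from e_(1+d), as 1 + d < n) against
   the f_1 of q_n'; for d < 0 it contains f_(1-d) against the e_(1-d) of
   q_n'; for d = 0 and n < n' the f_n of q_n meets the e_n of q_n'; and
   for d = 0, n = n' we get q_n^2 = q_n. *)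

Set Implicit Arguments.
Unset Strict Implicit.
Unset Printing Implicit Defensive.

Import GRing.Theory.
Local Open Scope fset_scope.
Local Open Scope ring_scope.

Lemma eq_sum_fset_supp (K : choiceType) (V : nmodType) (S S' : {fset K}) (F : K -> V) :
  (forall x, F x != 0 -> x \in S) -> (forall x, F x != 0 -> x \in S') ->
  \sum_(x <- S) F x = \sum_(x <- S') F x.
Proof.
have supp_sub T : T `<=` S `|` S' -> (forall x, F x != 0 -> x \in T) ->
    \sum_(x <- T) F x = \sum_(x <- S `|` S') F x.
  by move=> sub FT; apply: big_fset_incl => // x _; apply: contraNeq => /FT.
by move=> FS FS'; rewrite (supp_sub S) ?fsubsetUl // (supp_sub S') ?fsubsetUr.
Qed.

Section CommutingIdempotents.
Variables (R : pzRingType) (e T : int -> R).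
Hypotheses (e_idem : forall i, e i * e i = e i)
  (e_comm : forall i j, e i * e j = e j * e i)
  (T_add : forall a b, T a * T b = T (a + b)) (T0 : T 0 = 1)
  (T_e : forall d i, T d * e i = e (i - d) * T d).

Definition lit (p : int * bool) : R := if p.2 then e p.1 else 1 - e p.1.

Definition prod_lits (s : seq (int * bool)) : R := \prod_(p <- s) lit p.

Definition shift_lit (d : int) (p : int * bool) : int * bool := (p.1 - d, p.2).

Lemma lit_idem p : lit p * lit p = lit p.
Proof.
case: p => i [] /=; first exact: e_idem.
by rewrite mulrBl mul1r mulrBr mulr1 e_idem subrr subr0.
Qed.

Lemma lit_comm p p' : GRing.comm (lit p) (lit p').
Proof.
have e_lit_comm i : GRing.comm (e i) (lit p').
  by case: p' => j [] /=; [|apply: commrB; [apply: commr1|]]; apply: e_comm.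
case: p => i [] /=; first exact: e_lit_comm.
by apply/commr_sym/commrB; [apply: commr1 | apply/commr_sym/e_lit_comm].
Qed.

Lemma lit_orth i b : lit (i, b) * lit (i, ~~ b) = 0.
Proof. by case: b; rewrite /= ?(mulrBl, mulrBr, mul1r, mulr1) e_idem subrr. Qed.

Lemma T_lit d p : T d * lit p = lit (shift_lit d p) * T d.
Proof. by case: p => i [] /=; rewrite ?(mulrBl, mulrBr, mul1r, mulr1) T_e. Qed.

Lemma prod_lits_cons p s : prod_lits (p :: s) = lit p * prod_lits s.
Proof. exact: big_cons. Qed.

Lemma lit_prod_lits_comm p s : GRing.comm (lit p) (prod_lits s).
Proof. by apply: commr_prod => p' _; apply: lit_comm. Qed.

Lemma lit_prod_lits_absorb p s : p \in s -> lit p * prod_lits s = prod_lits s.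
Proof.
elim: s => // p' s IHs; rewrite inE prod_lits_cons mulrA => /predU1P[<-|ps].
  by rewrite lit_idem.
by rewrite lit_comm -mulrA IHs.
Qed.

Lemma prod_lits_idem s : prod_lits s * prod_lits s = prod_lits s.
Proof.
elim: s => [|p s IHs]; first by rewrite /prod_lits big_nil mul1r.
rewrite prod_lits_cons mulrA -(mulrA (lit p)) -lit_prod_lits_comm.
by rewrite mulrA lit_idem -mulrA IHs.
Qed.

Lemma prod_lits_orth s s' i b : (i, b) \in s -> (i, ~~ b) \in s' ->
  prod_lits s * prod_lits s' = 0.
Proof.
move=> /lit_prod_lits_absorb <- /lit_prod_lits_absorb <-.
by rewrite lit_prod_lits_comm mulrA -(mulrA (prod_lits s)) lit_orth mulr0 mul0r.
Qed.

Lemma T_prod_lits d s : T d * prod_lits s = prod_lits (map (shift_lit d) s) * T d.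
Proof.
elim: s => [|p s IHs]; first by rewrite /prod_lits !big_nil mul1r mulr1.
by rewrite /= !prod_lits_cons mulrA T_lit -!mulrA IHs.
Qed.

Definition qlits (n : nat) : seq (int * bool) :=
  (1, false) :: [seq (i%:Z, true) | i <- iota 2 (n - 2)] ++ [:: (n%:Z, false)].

Definition q (n : nat) : R := prod_lits (qlits n).

Lemma qlits_first n : (1, false) \in qlits n.
Proof. exact: mem_head. Qed.

Lemma qlits_mid n k : (2 <= k < n)%N -> (k%:Z, true) \in qlits n.
Proof.
by move=> k_mid; rewrite !(inE, mem_cat) map_f ?orbT // mem_iota; lia.
Qed.

Lemma qlits_last n : (n%:Z, false) \in qlits n.
Proof. by rewrite !(inE, mem_cat) eqxx !orbT. Qed.

Lemma q_orth n n' : (1 < n)%N -> (1 < n')%N -> n != n' -> q n' * q n = 0.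
Proof.
move=> n_gt1 n'_gt1; case: ltngtP => // [n_lt|n_gt] _.
  by apply: (@prod_lits_orth _ _ n true); [apply: qlits_mid; lia | apply: qlits_last].
by apply: (@prod_lits_orth _ _ n' false); [apply: qlits_last | apply: qlits_mid; lia].
Qed.

Lemma q_shift_orth n n' m m' : (1 <= m < n)%N -> (1 <= m' < n')%N -> m != m' ->
  q n' * prod_lits (map (shift_lit (m%:Z - m'%:Z)) (qlits n)) = 0.
Proof.
move=> hm hm'; case: ltngtP => // [m_lt|m_gt] _.
  apply: (@prod_lits_orth _ _ (1 + m' - m)%N true).
    by apply: qlits_mid; lia.
  have -> : ((1 + m' - m)%N%:Z, false) = shift_lit (m%:Z - m'%:Z) (1, false).
    by rewrite /shift_lit /=; congr pair; lia.
  exact/map_f/qlits_first.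
apply: (@prod_lits_orth _ _ 1 false); first exact: qlits_first.
have -> : (1, ~~ false) = shift_lit (m%:Z - m'%:Z) ((1 + m - m')%N%:Z, true).
  by rewrite /shift_lit /=; congr pair; lia.
by apply/map_f/qlits_mid; lia.
Qed.

Lemma q_T_q m n m' n' : (1 <= m < n)%N -> (1 <= m' < n')%N ->
  q n' * (T (- m'%:Z) * (T m%:Z * q n)) = if (n == n') && (m == m') then q n else 0.
Proof.
move=> hm hm'; rewrite (mulrA (T _)) T_add addrC T_prod_lits mulrA.
have [<-|neq_m] := eqVneq m m'; last by rewrite q_shift_orth ?mul0r ?andbF.
rewrite subrr T0 mulr1 andbT.
have -> : map (shift_lit 0) (qlits n) = qlits n.
  by rewrite -[RHS]map_id; apply: eq_map => -[i b]; rewrite /shift_lit subr0.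
have [<-|neq_n] := eqVneq n n'; first exact: prod_lits_idem.
by apply: q_orth => //; lia.
Qed.

End CommutingIdempotents.

Section GalgPointwise.
Variable G : choiceType.
Implicit Types (x g : G) (a b : galg G) (c : Cx).

Lemma galg_zeroE g : galg_zero G g = 0.
Proof. by rewrite fsfunE inE. Qed.

Lemma galg_ofE x g : galg_of x g = (g == x)%:R.
Proof. by rewrite fsfunE inE; case: eqP. Qed.

Lemma galg_addE a b g : galg_add a b g = a g + b g.
Proof.
rewrite fsfunE inE; case: ifP => // /norP[ag bg].
by rewrite !fsfun_dflt ?addr0.
Qed.

Lemma galg_scaleE c a g : galg_scale c a g = c * a g.
Proof. by rewrite fsfunE; case: ifP => // /negbT ag; rewrite fsfun_dflt ?mulr0. Qed.
End GalgPointwise.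

Definition group_algebra (G : groupType) : Type := galg G.

Section GroupAlgebraLmodule.
Variable G : groupType.
Local Notation A := (group_algebra G).
Implicit Types (a b c : A) (k l : Cx).

HB.instance Definition _ := Choice.on A.

Let addA : associative (@galg_add G).
Proof. by move=> a b c; apply/fsfunP => g; rewrite !galg_addE addrA. Qed.
Let addC : commutative (@galg_add G).
Proof. by move=> a b; apply/fsfunP => g; rewrite !galg_addE addrC. Qed.
Let add0 : left_id (galg_zero G) (@galg_add G).
Proof. by move=> a; apply/fsfunP => g; rewrite galg_addE galg_zeroE add0r. Qed.
Let addN : left_inverse (galg_zero G) (@galg_scale G (-1)) (@galg_add G).
Proof.
by move=> a; apply/fsfunP => g; rewrite galg_addE galg_scaleE galg_zeroE mulN1r addNr.
Qed.

HB.instance Definition _ := GRing.isZmodule.Build A addA addC add0 addN.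

Let scaleA k l a : galg_scale k (galg_scale l a) = galg_scale (k * l) a.
Proof. by apply/fsfunP => g; rewrite !galg_scaleE mulrA. Qed.
Let scale1 : left_id 1 (@galg_scale G).
Proof. by move=> a; apply/fsfunP => g; rewrite galg_scaleE mul1r. Qed.
Let scaleDr k a b : galg_scale k (a + b) = (galg_scale k a : A) + galg_scale k b.
Proof. by apply/fsfunP => g; rewrite !(galg_scaleE, galg_addE) mulrDr. Qed.
Let scaleDl a k l : galg_scale (k + l) a = (galg_scale k a : A) + galg_scale l a.
Proof. by apply/fsfunP => g; rewrite galg_addE !galg_scaleE mulrDl. Qed.

HB.instance Definition _ :=
  GRing.Zmodule_isLmodule.Build Cx A scaleA scale1 scaleDr scaleDl.
End GroupAlgebraLmodule.

Section Convolution.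
Variable G : groupType.
Local Notation A := (group_algebra G).
Local Notation gmul :=
  (galg_mul (fun x y : G => (x * y)%g) (fun x : G => x^-1%g) : A -> A -> A).
Implicit Types (x y g : G) (a b c : A).

Lemma galgDE a b g : (a + b) g = a g + b g.
Proof. exact: galg_addE. Qed.

Lemma galg_mulE a b g : gmul a b g = \sum_(x <- finsupp a) a x * b (x^-1 * g)%g.
Proof.
rewrite fsfunE; case: ifP => // /negbT gNab.
rewrite big1_seq // => x /andP[_ ax]; apply: contraNeq gNab.
rewrite mulf_eq0 negb_or => /andP[_ bx].
by apply/imfset2P; exists x => //; exists (x^-1 * g)%g; rewrite ?mem_finsupp ?mulVKg.
Qed.

Lemma galg_mulE_supp (S : {fset G}) a b g :
  (forall x, a x * b (x^-1 * g)%g != 0 -> x \in S) ->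
  gmul a b g = \sum_(x <- S) a x * b (x^-1 * g)%g.
Proof.
move=> abS; rewrite galg_mulE; apply: eq_sum_fset_supp => // x.
by rewrite mulf_eq0 negb_or mem_finsupp => /andP[].
Qed.

Lemma galg_mulEr a b g : gmul a b g = \sum_(y <- finsupp b) a (g * y^-1)%g * b y.
Proof.
rewrite (@galg_mulE_supp [fset (g * y^-1)%g | y in finsupp b]); last first.
  move=> x; rewrite mulf_eq0 negb_or => /andP[_ bx]; apply/imfsetP.
  by exists (x^-1 * g)%g; rewrite /= ?mem_finsupp // invgM invgK mulVKg.
rewrite big_imfset /=; last by move=> y z _ _ /mulgI /invg_inj.
by apply: eq_bigr => y _; rewrite invgM invgK mulgVK.
Qed.

Lemma finsupp_galg_of x : finsupp (galg_of x) = [fset x].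
Proof.
apply/fsetP => z; rewrite mem_finsupp galg_ofE inE.
by case: (z == x); rewrite ?oner_eq0 ?eqxx.
Qed.

Lemma galg_of_mull x a g : gmul (galg_of x) a g = a (x^-1 * g)%g.
Proof. by rewrite galg_mulE finsupp_galg_of big_seq_fset1 galg_ofE eqxx mul1r. Qed.

Lemma galg_of_mulr y a g : gmul a (galg_of y) g = a (g * y^-1)%g.
Proof. by rewrite galg_mulEr finsupp_galg_of big_seq_fset1 galg_ofE eqxx mulr1. Qed.

Let mulA : associative gmul.
Proof.
move=> a b c; apply/fsfunP => g; rewrite galg_mulE [RHS]galg_mulEr.
under eq_bigr do rewrite galg_mulEr mulr_sumr.
under [RHS]eq_bigr do rewrite galg_mulE mulr_suml.
rewrite exchange_big; apply: eq_bigr => z _; apply: eq_bigr => x _.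
by rewrite mulrA mulgA.
Qed.

Let mul1l : left_id (galg_one 1%g) gmul.
Proof. by move=> a; apply/fsfunP => g; rewrite galg_of_mull invg1 mul1g. Qed.

Let mul1r : right_id (galg_one 1%g) gmul.
Proof. by move=> a; apply/fsfunP => g; rewrite galg_of_mulr invg1 mulg1. Qed.

Let mulDl : left_distributive gmul +%R.
Proof.
move=> a b c; apply/fsfunP => g; rewrite galgDE !galg_mulEr -big_split.
by apply: eq_bigr => y _; rewrite galgDE mulrDl.
Qed.

Let mulDr : right_distributive gmul +%R.
Proof.
move=> a b c; apply/fsfunP => g; rewrite galgDE !galg_mulE -big_split.
by apply: eq_bigr => x _; rewrite galgDE mulrDr.
Qed.

HB.instance Definition _ := GRing.Zmodule_isPzRing.Build A mulA mul1l mul1r mulDl mulDr.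

Lemma galg_of_mul x y : (galg_of x : A) * galg_of y = galg_of (x * y)%g.
Proof.
apply/fsfunP => g; rewrite [LHS]galg_of_mull !galg_ofE.
by rewrite -(inj_eq (mulgI x)) mulVKg.
Qed.

End Convolution.

Lemma galg_mul_comm_supp (G : groupType) (a b : group_algebra G) :
  (forall x y, a x != 0 -> b y != 0 -> commute x y) -> a * b = b * a.
Proof.
move=> ab_comm; apply/fsfunP => g; rewrite galg_mulE galg_mulEr.
apply: eq_big_seq => x; rewrite mem_finsupp => ax; rewrite [RHS]mulrC; congr (_ * _).
have [bx0|bx] := eqVneq (b (x^-1 * g)%g) 0; last first.
  by have := ab_comm _ _ ax bx; rewrite /commute mulVKg => {2}->; rewrite mulgK.
have [by0|by'] := eqVneq (b (g * x^-1)%g) 0; first by rewrite bx0 by0.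
by have := ab_comm _ _ ax by'; rewrite /commute mulgVK => {1}<-; rewrite mulKg.
Qed.

Section GroupAlgebraMap.
Variables (G H : groupType) (f : G -> H).
Implicit Types (a b : group_algebra G).

Lemma galg_mapE a y : galg_map f a y = \sum_(x <- finsupp a | f x == y) a x.
Proof.
rewrite fsfunE; case: ifP => // /negbT yNfa; rewrite big1_seq // => x /andP[/eqP fx ax].
by case/imfsetP: yNfa; exists x.
Qed.

Lemma galg_map_neq0 a y : galg_map f a y != 0 -> exists2 x, a x != 0 & y = f x.
Proof.
rewrite galg_mapE.
have [/hasP[x ax /eqP fx] _|Nfy] := boolP (has (fun x => f x == y) (finsupp a)).
  by exists x; rewrite -?mem_finsupp.
by rewrite big_hasC ?eqxx.
Qed.

Hypotheses (f_inj : injective f) (fM : {morph f : x y / (x * y)%g}).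

Lemma galg_map_inj a x : galg_map f a (f x) = a x.
Proof.
rewrite galg_mapE (eq_bigl (pred1 x)) => [|z]; last exact: inj_eq.
have [ax|aNx] := boolP (x \in finsupp a).
  by rewrite -big_filter filter_pred1_uniq ?fset_uniq // big_seq1.
rewrite big1_seq => [|z /andP[/eqP -> ax]]; last by rewrite ax in aNx.
by apply/esym/eqP; rewrite -memNfinsupp.
Qed.

Let f1 : f 1%g = 1%g.
Proof. by apply: (mulgI (f 1%g)); rewrite -fM !mulg1. Qed.

Let fV x : f x^-1%g = (f x)^-1%g.
Proof. by apply: (mulgI (f x)); rewrite -fM !mulgV. Qed.

Lemma galg_map_mul a b :
  galg_map f (a * b) = (galg_map f a : group_algebra H) * galg_map f b.
Proof.
apply/fsfunP => w; rewrite (@galg_mulE_supp _ [fset f x | x in finsupp a]); last first.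
  move=> z; rewrite mulf_eq0 negb_or => /andP[/galg_map_neq0[x ax ->] _].
  by apply/imfsetP; exists x; rewrite /= ?mem_finsupp.
rewrite big_imfset /=; last by move=> x z _ _; apply: f_inj.
have [[u ->]|w_out] := classic (exists u, w = f u).
  rewrite galg_map_inj galg_mulE; apply: eq_bigr => x _.
  by rewrite -fV -fM !galg_map_inj.
have map_out c v : ~ (exists u, v = f u) -> galg_map f c v = 0.
  move=> v_out; apply/eqP; apply: contraT => /galg_map_neq0[x _ vx].
  by case: v_out; exists x.
rewrite map_out // big1 // => x _; rewrite [galg_map f b _]map_out ?mulr0 //.
case=> y /(congr1 (fun v => f x * v)%g); rewrite mulVKg -fM => wfxy.
by apply: w_out; exists (x * y)%g.
Qed.
End GroupAlgebraMap.

Section WreathGroup.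
Variable U : groupType.
Implicit Types (g h k : dsum U) (u v : U) (n i j : int).

Lemma dsum_mulE g h n : dsum_mul g h n = (g n * h n)%g.
Proof.
rewrite fsfunE inE; case: ifP => // /norP[gn hn].
by rewrite !fsfun_dflt ?mulg1.
Qed.

Lemma dsum_invE g n : dsum_inv g n = (g n)^-1%g.
Proof. by rewrite fsfunE; case: ifP => // /negbT gn; rewrite fsfun_dflt ?invg1. Qed.

Lemma dsum_shiftE i g n : dsum_shift i g n = g (n - i).
Proof.
rewrite fsfunE; case: ifP => // /negP gn; rewrite fsfun_dflt //; apply/negP.
by apply: contra_not gn => gni; apply/imfsetP; exists (n - i); rewrite ?subrK.
Qed.

Lemma dsum_oneE n : dsum_one U n = 1%g.
Proof. by rewrite fsfunE inE. Qed.

Lemma dsum_ofE u n : dsum_of u n = if n == 0 then u else 1%g.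
Proof. by rewrite fsfunE inE. Qed.

Let dsumE := (dsum_mulE, dsum_invE, dsum_shiftE, dsum_oneE).

Let wmulA : associative (@wmul U).
Proof.
move=> [g a] [h b] [k c]; congr pair; last exact: addrA.
by apply/fsfunP => n; rewrite /= !dsumE mulgA !opprK addrA.
Qed.

Let wmul1 : left_id (wone U) (@wmul U).
Proof.
move=> [g a]; congr pair; last exact: add0r.
by apply/fsfunP => n; rewrite /= !dsumE mul1g oppr0 subr0.
Qed.

Let wmulg1 : right_id (wone U) (@wmul U).
Proof.
move=> [g a]; congr pair; last exact: addr0.
by apply/fsfunP => n; rewrite /= !dsumE mulg1.
Qed.

Let wmulVg : left_inverse (wone U) (@winv U) (@wmul U).
Proof.
move=> [g a]; congr pair; last exact: addNr.
by apply/fsfunP => n; rewrite /= !dsumE opprK mulVg.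
Qed.

Let wmulgV : right_inverse (wone U) (@winv U) (@wmul U).
Proof.
move=> [g a]; congr pair; last exact: subrr.
by apply/fsfunP => n; rewrite /= !dsumE opprK addrK mulgV.
Qed.

Definition wreath_group : Type := wreath U.
HB.instance Definition _ := Choice.on wreath_group.
HB.instance Definition _ := isGroup.Build wreath_group wmulA wmul1 wmulg1 wmulVg wmulgV.

Definition wsite i u : wreath_group := (dsum_shift i (dsum_of u), 0).

Lemma wpowzE i : wpowz (wt U) i = (dsum_one U, i).
Proof.
have wpownE (m : nat) : wpown (wt U) m = (dsum_one U, m%:Z).
  elim: m => // m IHm; rewrite /wpown iterS -/(wpown _ _) IHm; congr pair.
  by apply/fsfunP => n; rewrite /= !dsumE mulg1.
case: i => m; first exact: wpownE.
rewrite /= wpownE NegzE; congr pair.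
by apply/fsfunP => n; rewrite /= !dsumE mulg1 invg1.
Qed.

Lemma wpowzD i j :
  ((wpowz (wt U) i : wreath_group) * wpowz (wt U) j)%g = wpowz (wt U) (i + j).
Proof.
rewrite !wpowzE; congr pair.
by apply/fsfunP => n; rewrite /= !dsumE mulg1.
Qed.

Lemma wpowzN i : wpowz (wt U) (- i) = (wpowz (wt U) i : wreath_group)^-1%g.
Proof.
rewrite !wpowzE; congr pair.
by apply/fsfunP => n; rewrite /= !dsumE invg1.
Qed.

Lemma wsiteM i : {morph wsite i : u v / (u * v)%g}.
Proof.
move=> u v; congr pair; apply/fsfunP => n; rewrite /= !dsumE !dsum_ofE oppr0 subr0.
by case: ifP; rewrite ?mulg1.
Qed.

Lemma wsite_inj i : injective (wsite i).
Proof.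
by move=> u v [] /(congr1 (fun g => g i)); rewrite !dsum_shiftE !dsum_ofE subrr eqxx.
Qed.

Lemma wsite_commute i j u v : i != j -> commute (wsite i u) (wsite j v).
Proof.
move=> neq_ij; congr pair; apply/fsfunP => n.
rewrite /= !dsumE !dsum_ofE oppr0 !subr0 !subr_eq0.
by case: (eqVneq n i) => [-> | _]; rewrite ?(negbTE neq_ij) ?mulg1 ?mul1g.
Qed.

Lemma wU_conj i u : ((wU u : wreath_group) ^ wpowz (wt U) i)%g = wsite i u.
Proof.
rewrite wpowzE; congr pair; last by change (- i + (0 + i) = 0); rewrite add0r addNr.
by apply/fsfunP => n; rewrite /= !dsumE invg1 mul1g mulg1 !opprK.
Qed.

End WreathGroup.

Section WreathAlgebra.
Variables (U : groupType) (e : group_algebra U).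
Local Notation WG := (wreath_group U).
Local Notation WA := (group_algebra WG).
Local Notation ei i := (e_ e i : WA).

Lemma Wmul_mulr (a b : W U) : Wmul a b = (a : WA) * b.
Proof. by []. Qed.

Lemma Wt_add a b : (Wt U a : WA) * Wt U b = Wt U (a + b).
Proof. by rewrite galg_of_mul wpowzD. Qed.

Lemma Wt0 : Wt U 0 = 1 :> WA.
Proof. by []. Qed.

Lemma e_E i :
  e_ e i = (Wt U (- i) : WA) * ((galg_map (@wU U : U -> WG) e : WA) * Wt U i).
Proof. by []. Qed.

Lemma e_map i : ei i = galg_map (wsite i) e.
Proof.
apply/fsfunP => w; rewrite e_E /Wt galg_of_mull galg_of_mulr !galg_mapE.
apply: eq_bigl => u; rewrite -wU_conj (can2_eq (conjgK _) (conjgKV _)) wpowzN invgK.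
by rewrite conjgE invgK mulgA.
Qed.

Lemma e_idem : e * e = e -> forall i, ei i * ei i = ei i.
Proof.
by move=> ee i; rewrite e_map -galg_map_mul ?ee //; [apply: wsite_inj | apply: wsiteM].
Qed.

Lemma e_comm i j : ei i * ei j = ei j * ei i.
Proof.
have [-> // | neq_ij] := eqVneq i j; rewrite !e_map.
apply: galg_mul_comm_supp => x y /galg_map_neq0[u _ ->] /galg_map_neq0[v _ ->].
exact: wsite_commute.
Qed.

Lemma Wt_e d i : (Wt U d : WA) * ei i = ei (i - d) * Wt U d.
Proof.
rewrite (e_E i) (e_E (i - d)) !mulrA Wt_add -[RHS]mulrA Wt_add.
by rewrite subrK opprB.
Qed.

Lemma f_lit i : f_ e i = lit (fun i => ei i) (i, false).
Proof. by []. Qed.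

Lemma q_E n : q_ e n = q (fun i => ei i) n.
Proof.
rewrite /q_ /q /prod_lits /qlits big_cons Wmul_mulr f_lit; apply: congr1.
elim: (iota 2 (n - 2)) => [|i l IHl] /=; first by rewrite big_seq1 f_lit.
by rewrite Wmul_mulr big_cons IHl.
Qed.

End WreathAlgebra.

Theorem lemma3p2 (U : groupType) (torsion : has_torsion U)
  (e : galg U) (he : nontrivial_projection_in e)
  (m n m' n' : nat) (hmn : (1 <= m < n)%N) (hmn' : (1 <= m' < n')%N) :
  Wmul (q_ e n') (Wmul (Wt U (- m'%:Z)) (Wmul (Wt U m%:Z) (q_ e n)))
  = galg_scale ((n == n')%:R * (m == m')%:R) (q_ e n).
Proof.
have [_ ee _ _] := he.
rewrite -[galg_scale _ _]/(_ *: (q_ e n : group_algebra (wreath_group U))).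
rewrite !Wmul_mulr !q_E.
rewrite (q_T_q (e_idem ee) (@e_comm U e) (@Wt_add U) (Wt0 U) (@Wt_e U e) hmn hmn').
by case: eqP; case: eqP; rewrite /= ?mulr1 ?mulr0 ?scale1r ?scale0r.
Qed.
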